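(* For all formulas $\varphi_1,\psi_1,\psi_2$ and every formula with placeholders $\varphi_2$: $\varphi_1\,\mathbf{W}\,\varphi_2[\psi_1\mathbf{U}\psi_2] \equiv (\varphi_1\,\mathbf{U}\,\varphi_2[\psi_1\mathbf{U}\psi_2]) \vee \mathbf{G}\varphi_1$. Moreover, for every formula with placeholders $\varphi_1$ and all formulas $\varphi_2,\psi_1,\psi_2$: $\varphi_1[\psi_1\mathbf{U}\psi_2]\,\mathbf{W}\,\varphi_2 \equiv (\mathbf{GF}\psi_2 \wedge \varphi_1[\psi_1\mathbf{W}\psi_2]\,\mathbf{W}\,\varphi_2) \vee \varphi_1[\psi_1\mathbf{U}\psi_2]\,\mathbf{U}\,(\varphi_2 \vee \mathbf{G}\varphi_1[\mathbf{false}])$.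
   Context: Fix a finite set $Ap$ of atomic propositions. A word is an infinite sequence $w = w[0]w[1]\dots$ of letters of $2^{Ap}$, and $w_i$ denotes the suffix $w[i]w[i+1]\dots$. Formulas are generated by $\varphi ::= \mathbf{true} \mid \mathbf{false} \mid a \mid \neg a \mid \varphi\wedge\varphi \mid \varphi\vee\varphi \mid \mathbf{X}\varphi \mid \varphi\,\mathbf{U}\,\varphi \mid \varphi\,\mathbf{W}\,\varphi \mid \mathbf{GF}\varphi \mid \mathbf{FG}\varphi$ ($a\in Ap$), where $\mathbf{GF}$, $\mathbf{FG}$ are single unary operators. Semantics: $w\models a$ iff $a\in w[0]$, $w\models\neg a$ iff $a\notin w[0]$, Boolean constants and connectives as usual; $w\models\mathbf{X}\varphi$ iff $w_1\models\varphi$; $w\models\varphi\mathbf{U}\psi$ iff $\exists k$: $w_k\models\psi$ and $\forall j<k$: $w_j\models\varphi$; $w\models\varphi\mathbf{W}\psi$ iff ($\forall k$: $w_k\models\varphi$) or $w\models\varphi\mathbf{U}\psi$; $w\models\mathbf{GF}\varphi$ iff $w_k\models\varphi$ for infinitely many $k$; $w\models\mathbf{FG}\varphi$ iff $\exists n\,\forall k\geq n$: $w_k\models\varphi$. $\mathbf{G}\varphi$ abbreviates $\varphi\,\mathbf{W}\,\mathbf{false}$ (so $w\models\mathbf{G}\varphi$ iff $w_k\models\varphi$ for all $k$). $\varphi\equiv\psi$ means both formulas are satisfied by exactly the same words. A formula with placeholders is a formula over $Ap\cup\{\star\}$, where $\star$ is a special fresh atomic proposition, with at least one occurrence of $\star$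 and no occurrence of $\neg\star$; for such $\varphi$ and a formula $\psi$, $\varphi[\psi]$ denotes the result of substituting $\psi$ for every occurrence of $\star$. Substitution binds more strongly than any operator, e.g. $\varphi_1\,\mathbf{W}\,\varphi_2[\psi]$ means $\varphi_1\,\mathbf{W}\,(\varphi_2[\psi])$. *)

From mathcomp Require Import all_boot.
Set Implicit Arguments. Unset Strict Implicit. Unset Printing Implicit Defensive.

(* LTL formulas in negation normal form over atomic propositions of type A *)
Inductive formula (A : Type) : Type :=
| FTrue | FFalse
| FAtom of A
| FNAtom of A
| FAnd of formula A & formula A
| FOr of formula A & formula A
| FX of formula A
| FU of formula A & formula A
| FW of formula A & formula A
| FGF of formula A
| FFG of formula A.

Arguments FTrue {A}. Arguments FFalse {A}.

Definition FG (A : Type) (f : formula A) : formula A := FW f FFalse.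

Definition word (Ap : finType) := nat -> {set Ap}.
Definition suffix (Ap : finType) (w : word Ap) (i : nat) : word Ap :=
  fun k => w (i + k).

Fixpoint sat (Ap : finType) (w : word Ap) (f : formula Ap) : Prop :=
  match f with
  | FTrue => True
  | FFalse => False
  | FAtom a => a \in w 0
  | FNAtom a => a \notin w 0
  | FAnd f1 f2 => sat w f1 /\ sat w f2
  | FOr f1 f2 => sat w f1 \/ sat w f2
  | FX f1 => sat (suffix w 1) f1
  | FU f1 f2 => exists k, sat (suffix w k) f2 /\ forall j, j < k -> sat (suffix w j) f1
  | FW f1 f2 => (forall k, sat (suffix w k) f1) \/
                exists k, sat (suffix w k) f2 /\ forall j, j < k -> sat (suffix w j) f1
  | FGF f1 => forall n, exists k, n <= k /\ sat (suffix w k) f1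
  | FFG f1 => exists n, forall k, n <= k -> sat (suffix w k) f1
  end.

Definition ltl_equiv (Ap : finType) (f g : formula Ap) : Prop :=
  forall w : word Ap, sat w f <-> sat w g.

(* Formulas with placeholders: formulas over Ap ∪ {star}, encoded as option Ap
   with None = star; at least one occurrence of star and none of ¬star. *)
Fixpoint has_star (A : Type) (f : formula (option A)) : bool :=
  match f with
  | FTrue | FFalse => false
  | FAtom a => if a is None then true else false
  | FNAtom _ => false
  | FAnd f1 f2 | FOr f1 f2 | FU f1 f2 | FW f1 f2 => has_star f1 || has_star f2
  | FX f1 | FGF f1 | FFG f1 => has_star f1
  end.

Fixpoint no_neg_star (A : Type) (f : formula (option A)) : bool :=
  match f with
  | FNAtom a => if a is None then false else true
  | FTrue | FFalse | FAtom _ => true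
  | FAnd f1 f2 | FOr f1 f2 | FU f1 f2 | FW f1 f2 => no_neg_star f1 && no_neg_star f2
  | FX f1 | FGF f1 | FFG f1 => no_neg_star f1
  end.

Definition placeholder_formula (A : Type) (f : formula (option A)) : Prop :=
  has_star f /\ no_neg_star f.

Fixpoint subst (A : Type) (f : formula (option A)) (psi : formula A) : formula A :=
  match f with
  | FTrue => FTrue
  | FFalse => FFalse
  | FAtom (Some a) => FAtom a
  | FAtom None => psi
  | FNAtom (Some a) => FNAtom a
  | FNAtom None => FFalse  (* unreachable: placeholder formulas contain no ¬star *)
  | FAnd f1 f2 => FAnd (subst f1 psi) (subst f2 psi)
  | FOr f1 f2 => FOr (subst f1 psi) (subst f2 psi)
  | FX f1 => FX (subst f1 psi)
  | FU f1 f2 => FU (subst f1 psi) (subst f2 psi)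
  | FW f1 f2 => FW (subst f1 psi) (subst f2 psi)
  | FGF f1 => FGF (subst f1 psi)
  | FFG f1 => FFG (subst f1 psi)
  end.

From mathcomp Require Import all_boot.
From Stdlib Require Import FunctionalExtensionality Classical.

(* Substitution into a formula without negated placeholders is monotone: if
   [p] implies [q] at every position, so does [phi[p]] imply [phi[q]].  For the
   first equivalence, [a W b] is [a U b \/ G a] for any [b].  For the second,
   if [psi2] holds infinitely often then [psi1 U psi2] and [psi1 W psi2] agree
   everywhere, so monotonicity exchanges them inside [phi1]; otherwise
   [psi1 U psi2] is eventually false, so an infinite run of [phi1[psi1 U psi2]]
   eventually reaches a point where [G phi1[false]] holds, and conversely
   [false] implies anything. *)

Set Implicit Arguments.
Unset Strict Implicit.
Unset Printing Implicit Defensive.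

Section Semantics.

Variable Ap : finType.
Implicit Types (w : word Ap) (p q r : formula Ap).

Lemma suffix_suffix w i j : suffix (suffix w i) j = suffix w (i + j).
Proof. by apply: functional_extensionality => k; rewrite /suffix addnA. Qed.

Lemma sat_FG w p : sat w (FG p) <-> forall k, sat (suffix w k) p.
Proof. by split=> [[// | [k [[]]]] | ?]; left. Qed.

Lemma sat_FW_FU_FG w p q : sat w (FW p q) <-> sat w (FOr (FU p q) (FG p)).
Proof.
by split=> [[Hp | HU] | [HU | [Hp | [k [[]]]]]]; [right; left | left | right | left].
Qed.

Definition globally_implies w p q := forall i, sat (suffix w i) p -> sat (suffix w i) q.

Lemma globally_implies_suffix w p q :
  globally_implies w p q -> forall k, globally_implies (suffix w k) p q.
Proof. by move=> H k i; rewrite suffix_suffix; apply: H. Qed.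

Lemma globally_implies_subst (f : formula (option Ap)) w p q :
  no_neg_star f -> globally_implies w p q ->
  globally_implies w (subst f p) (subst f q).
Proof.
move=> Hf H; elim: f Hf => [| |[a|]|[a|]|f1 IH1 f2 IH2|f1 IH1 f2 IH2|f1 IH1
  |f1 IH1 f2 IH2|f1 IH1 f2 IH2|f1 IH1|f1 IH1] Hf i //=.
- exact: H.
- by case/andP: Hf => /IH1 H1 /IH2 H2 [/H1 ? /H2 ?].
- by case/andP: Hf => /IH1 H1 /IH2 H2 [/H1 | /H2]; [left | right].
- by rewrite suffix_suffix; apply: (IH1 Hf).
- case/andP: Hf => /IH1/globally_implies_suffix H1 /IH2/globally_implies_suffix H2.
  by case=> k [/(H2 i) Hk Hb]; exists k; split=> // j /Hb /(H1 i).
- case/andP: Hf => /IH1/globally_implies_suffix H1 /IH2/globally_implies_suffix H2.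
  case=> [Hg | [k [/(H2 i) Hk Hb]]]; first by left=> k; apply: (H1 i).
  by right; exists k; split=> // j /Hb /(H1 i).
- move: Hf => /IH1/globally_implies_suffix H1 Hinf n.
  by have [k [Hnk /(H1 i)]] := Hinf n; exists k.
- move: Hf => /IH1/globally_implies_suffix H1 [n Hev].
  by exists n => k /Hev /(H1 i).
Qed.

Lemma sat_FW_globally_implies w p q r :
  globally_implies w p q -> sat w (FW p r) -> sat w (FW q r).
Proof.
move=> H [Hp | [k [Hr Hb]]]; first by left=> k; exact: H (Hp k).
by right; exists k; split=> // j /Hb /H.
Qed.

Lemma globally_implies_FU_FW w p q : globally_implies w (FU p q) (FW p q).
Proof. by move=> i HU; right. Qed.

Lemma sat_FGF_suffix w k q : sat w (FGF q) -> sat (suffix w k) (FGF q).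
Proof.
move=> Hinf n; have [m [Hm Hq]] := Hinf (k + n).
have Hkm : k <= m := leq_trans (leq_addr n k) Hm.
by exists (m - k); rewrite suffix_suffix subnKC // leq_subRL.
Qed.

Lemma sat_FW_FU_of_FGF w p q : sat w (FGF q) -> sat w (FW p q) -> sat w (FU p q).
Proof.
move=> Hinf [Hp | //]; have [k [_ Hq]] := Hinf 0.
by exists k; split=> // j _; apply: Hp.
Qed.

Lemma globally_implies_FW_FU w p q :
  sat w (FGF q) -> globally_implies w (FW p q) (FU p q).
Proof. by move=> Hinf i; apply/sat_FW_FU_of_FGF/sat_FGF_suffix. Qed.

Lemma not_sat_FGF w q :
  ~ sat w (FGF q) -> exists n, forall k, n <= k -> ~ sat (suffix w k) q.
Proof.
move=> Hfin; apply: NNPP => Hall; apply: Hfin => n; apply: NNPP => Hnone.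
by apply: Hall; exists n => k Hnk Hq; apply: Hnone; exists k.
Qed.

Lemma globally_implies_FU_FFalse w n p q :
  (forall k, n <= k -> ~ sat (suffix w k) q) ->
  globally_implies (suffix w n) (FU p q) FFalse.
Proof.
move=> Hnever i [m [Hq _]]; apply: (Hnever (n + i + m)); first by rewrite -addnA leq_addr.
by rewrite -!suffix_suffix.
Qed.

Section SubstUntil.

Variables (f : formula (option Ap)) (p q r : formula Ap).
Hypothesis Hf : no_neg_star f.

Lemma sat_FW_subst_FU_forward w :
  sat w (FW (subst f (FU p q)) r) ->
  sat w (FOr (FAnd (FGF q) (FW (subst f (FW p q)) r))
             (FU (subst f (FU p q)) (FOr r (FG (subst f FFalse))))).
Proof.
move=> H; have [Hinf | Hfin] := classic (sat w (FGF q)).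
  left; split=> //; apply: sat_FW_globally_implies H.
  exact/globally_implies_subst/globally_implies_FU_FW.
right; have [n Hnever] := not_sat_FGF Hfin.
case/sat_FW_FU_FG: H => [[k [Hr Hb]] | /sat_FG Hg].
  by exists k; split=> //; left.
exists n; split=> [|j _]; last exact: Hg.
right; apply/sat_FG => k.
apply: (globally_implies_subst Hf (globally_implies_FU_FFalse (p := p) Hnever)).
by rewrite suffix_suffix.
Qed.

Lemma sat_FW_subst_FU_backward w :
  sat w (FOr (FAnd (FGF q) (FW (subst f (FW p q)) r))
             (FU (subst f (FU p q)) (FOr r (FG (subst f FFalse))))) ->
  sat w (FW (subst f (FU p q)) r).
Proof.
case=> [[Hinf HW] | [k [[Hr | /sat_FG Hg] Hb]]].
- apply: sat_FW_globally_implies HW.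
  exact/globally_implies_subst/globally_implies_FW_FU.
- by right; exists k.
- left=> j; case: (ltnP j k) => [/Hb // | Hkj].
  have Hfalse : globally_implies w FFalse (FU p q) by move=> ? [].
  have := Hg (j - k); rewrite suffix_suffix subnKC //.
  exact: (globally_implies_subst Hf Hfalse).
Qed.

End SubstUntil.

End Semantics.

Theorem lemma1 (Ap : finType) :
  (forall (phi1 psi1 psi2 : formula Ap) (phi2 : formula (option Ap)),
      placeholder_formula phi2 ->
      ltl_equiv (FW phi1 (subst phi2 (FU psi1 psi2)))
            (FOr (FU phi1 (subst phi2 (FU psi1 psi2))) (FG phi1))) /\
  (forall (phi1 : formula (option Ap)) (phi2 psi1 psi2 : formula Ap),
      placeholder_formula phi1 ->
      ltl_equiv (FW (subst phi1 (FU psi1 psi2)) phi2)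
            (FOr (FAnd (FGF psi2) (FW (subst phi1 (FW psi1 psi2)) phi2))
                 (FU (subst phi1 (FU psi1 psi2))
                     (FOr phi2 (FG (subst phi1 FFalse)))))).
Proof.
split=> [phi1 psi1 psi2 phi2 _ w | phi1 phi2 psi1 psi2 [_ Hneg] w].
  exact: sat_FW_FU_FG.
split; [exact: sat_FW_subst_FU_forward Hneg w | exact: sat_FW_subst_FU_backward Hneg w].
Qed.
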